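(* Let $w=(1+\sqrt{-3})/2$. Suppose that every Eisenstein integer $a+bw$ with integers $a>3$, $b>3$ can be written as $p+q$ with $p,q$ Eisenstein primes lying in $Q=\{x+yw : x,y\in\mathbb{Z},\ x>0,\ y>0\}$. Then there are infinitely many positive integers $n$ such that $n^2+n+1$ is a rational prime.
   Context: Here $w=(1+\sqrt{-3})/2$ (a primitive sixth root of unity, $w^3=-1$). Eisenstein integers are the elements $a+bw$ with $a,b\in\mathbb{Z}$, forming the ring $\mathbb{Z}[w]$, with norm $N(a+bw)=|a+bw|^2=a^2+ab+b^2$. An Eisenstein prime is an irreducible (equivalently, prime) element of $\mathbb{Z}[w]$. $Q$ denotes the set of Eisenstein integers $a+bw$ with $a>0$ and $b>0$. *)

From HB Require Import structures.
From mathcomp Require Import all_boot all_order all_algebra.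
Set Implicit Arguments. Unset Strict Implicit. Unset Printing Implicit Defensive.
Import Order.TTheory GRing.Theory Num.Theory.
Local Open Scope ring_scope.

(* The Eisenstein integer  re + im * w. *)
Record eis := Eis { re : int; im : int }.

Definition eis_zero : eis := Eis 0 0.
Definition eis_one : eis := Eis 1 0.
Definition eis_add (x y : eis) : eis := Eis (re x + re y) (im x + im y).
(* (a + b w)(c + d w) = (ac - bd) + (ad + bc + bd) w, using w^2 = w - 1 *)
Definition eis_mul (x y : eis) : eis :=
  Eis (re x * re y - im x * im y) (re x * im y + im x * re y + im x * im y).

Definition eis_norm (x : eis) : int := re x ^+ 2 + re x * im x + im x ^+ 2.

Definition eis_unit (x : eis) : Prop := exists y, eis_mul x y = eis_one.

(* Eisenstein prime = irreducible element of Z[w] *)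
Definition eis_prime (p : eis) : Prop :=
  p <> eis_zero /\ ~ eis_unit p /\
  forall x y, p = eis_mul x y -> eis_unit x \/ eis_unit y.

Definition inQ (x : eis) : Prop := 0 < re x /\ 0 < im x.

(* Choose [a = 4] and [b = 7 P], where [P] is the (odd) product of the norms
   [k^2 - 3k + 9] of [(k - 3) + 3w] for [1 <= k <= N], and split
   [4 + b w = p + q] as in the hypothesis.  Real parts [2 + 2] are impossible:
   [b] is odd, so one summand is [2 + 2m w = 2 (1 + m w)], which is reducible.
   Otherwise one summand is [1 + n w] and the other is [3 + (b - n) w].  If
   [n <= N] then [(n - 3) + 3w] divides [3 + (b - n) w], which is therefore
   reducible; so [n > N], and because [Z[w]] is Euclidean the irreducible
   [1 + n w] is prime, which forces its norm [n^2 + n + 1] to be a rational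
   prime. *)
From HB Require Import structures.
From mathcomp Require Import all_boot all_order all_algebra.
From mathcomp Require Import ring zify.
Set Implicit Arguments.
Unset Strict Implicit.
Unset Printing Implicit Defensive.
Import Order.TTheory GRing.Theory Num.Theory.
Local Open Scope ring_scope.

Lemma eis_ext x y : re x = re y -> im x = im y -> x = y.
Proof. by case: x; case: y => /= ? ? ? ? -> ->. Qed.

Ltac eis_ring := repeat match goal with x : eis |- _ => destruct x end;
  apply: eis_ext; rewrite /eis_mul /eis_add /=; ring.

Definition eis_sub (x y : eis) : eis := Eis (re x - re y) (im x - im y).
Definition eis_conj (x : eis) : eis := Eis (re x + im x) (- im x).
Definition eis_dvd (d x : eis) : Prop := exists c, x = eis_mul d c.

Lemma eis_mulA x y z : eis_mul x (eis_mul y z) = eis_mul (eis_mul x y) z.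
Proof. eis_ring. Qed.

Lemma eis_mul1 x : eis_mul x eis_one = x.
Proof. eis_ring. Qed.

Lemma eis_mul_conj x : eis_mul x (eis_conj x) = Eis (eis_norm x) 0.
Proof. case: x => a b; apply: eis_ext; rewrite /eis_norm /=; ring. Qed.

Lemma eis_normM x y : eis_norm (eis_mul x y) = eis_norm x * eis_norm y.
Proof. case: x; case: y => *; rewrite /eis_norm /=; ring. Qed.

Lemma eis_norm_ge0 x : 0 <= eis_norm x.
Proof. case: x => a b; rewrite /eis_norm /=; nia. Qed.

Lemma eis_norm_eq0 x : eis_norm x = 0 -> x = eis_zero.
Proof. case: x => a b; rewrite /eis_norm /= => H; apply: eis_ext => /=; nia. Qed.

Lemma eis_norm_unit x : eis_unit x -> eis_norm x = 1.
Proof.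
case=> y /(congr1 eis_norm); rewrite eis_normM [eis_norm eis_one]/eis_norm /=.
have := eis_norm_ge0 x; have := eis_norm_ge0 y.
move: (eis_norm x) (eis_norm y) => nx ny ny_ge0 nx_ge0 Exy.
have [ny0|ny_ge1] : ny = 0 \/ 1 <= ny by lia.
  by rewrite ny0 mulr0 in Exy.
by nia.
Qed.

Lemma eis_mul_not_prime x y :
  eis_norm x != 1 -> eis_norm y != 1 -> ~ eis_prime (eis_mul x y).
Proof.
move=> /eqP nx /eqP ny [_ [_ irr]].
by case: (irr x y erefl) => /eis_norm_unit.
Qed.

Lemma divz_nearest (A n : int) : 0 < n ->
  exists q r, A = q * n + r /\ - n <= 2 * r <= n.
Proof.
move=> n_gt0; have EA := divz_eq A n.
have r_ge0 := modz_ge0 A (lt0r_neq0 n_gt0); have r_lt := ltz_pmod A n_gt0.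
case: (lerP (2 * (A %% n)%Z) n) => r_small.
  by exists (A %/ n)%Z, (A %% n)%Z; split => //; lia.
by exists ((A %/ n)%Z + 1), ((A %% n)%Z - n); split; lia.
Qed.

(* Round the coordinates of [x conj(d) / N(d)]; the rounding error [r] has
   [N(r) <= 3/4 N(d)^2], and [N(x - q d) N(d) = N(r)]. *)
Lemma eis_euclid x d : d <> eis_zero ->
  exists q r, x = eis_add (eis_mul q d) r /\ eis_norm r < eis_norm d.
Proof.
move=> d_neq0; have n_gt0 : 0 < eis_norm d.
  by rewrite lt0r eis_norm_ge0 andbT; apply/eqP => /eis_norm_eq0.
set c := eis_mul x (eis_conj d).
have [qA [rA [EA BA]]] := divz_nearest (re c) n_gt0.
have [qB [rB [EB BB]]] := divz_nearest (im c) n_gt0.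
set q := Eis qA qB.
exists q, (eis_sub x (eis_mul q d)); split; first by eis_ring.
have err_small : 4 * (rA ^+ 2 + rA * rB + rB ^+ 2) < 4 * eis_norm d ^+ 2.
  by move: BA BB n_gt0; nia.
have err_norm :
    eis_norm (eis_sub x (eis_mul q d)) * eis_norm d = rA ^+ 2 + rA * rB + rB ^+ 2.
  have -> : rA = re c - qA * eis_norm d by lia.
  have -> : rB = im c - qB * eis_norm d by lia.
  by rewrite /c /q; clear; case: x; case: d => *; rewrite /eis_norm /=; ring.
by have := eis_norm_ge0 (eis_sub x (eis_mul q d)); move: err_norm err_small n_gt0; nia.
Qed.

Lemma eis_eq0_dec x : x = eis_zero \/ x <> eis_zero.
Proof.
case: x => a b; case: (a =P 0) => [->|ha]; case: (b =P 0) => [->|hb]; auto;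
  by right => -[].
Qed.

Definition eis_comb (z R g : eis) : Prop :=
  exists al be, g = eis_add (eis_mul al z) (eis_mul be R).

Lemma eis_comb_rem z R g x q r : eis_comb z R g -> eis_comb z R x ->
  x = eis_add (eis_mul q g) r -> eis_comb z R r.
Proof.
move=> [al [be ->]] [al' [be' ->]] Ex.
exists (eis_sub al' (eis_mul q al)), (eis_sub be' (eis_mul q be)).
have -> : r = eis_sub (eis_add (eis_mul al' z) (eis_mul be' R))
                (eis_mul q (eis_add (eis_mul al z) (eis_mul be R))).
  by rewrite Ex; eis_ring.
eis_ring.
Qed.

Lemma eis_dvd_of_rem0 g x q r :
  x = eis_add (eis_mul q g) r -> r = eis_zero -> eis_dvd g x.
Proof. by move=> -> ->; exists q; eis_ring. Qed.

Lemma eis_comb_descent z R g : eis_comb z R g -> g <> eis_zero ->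
  (eis_dvd g z /\ eis_dvd g R) \/
  exists g', [/\ eis_comb z R g', g' <> eis_zero & eis_norm g' < eis_norm g].
Proof.
move=> comb_g g_neq0.
have comb_z : eis_comb z R z by exists eis_one, eis_zero; eis_ring.
have comb_R : eis_comb z R R by exists eis_zero, eis_one; eis_ring.
have [q1 [r1 [E1 L1]]] := eis_euclid z g_neq0.
have [q2 [r2 [E2 L2]]] := eis_euclid R g_neq0.
case: (eis_eq0_dec r1) => [r1_0|r1_neq0]; last first.
  by right; exists r1; split => //; apply: eis_comb_rem E1.
case: (eis_eq0_dec r2) => [r2_0|r2_neq0]; last first.
  by right; exists r2; split => //; apply: eis_comb_rem E2.
by left; split; [apply: eis_dvd_of_rem0 E1 r1_0 | apply: eis_dvd_of_rem0 E2 r2_0].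
Qed.

Lemma eis_gcd z R : z <> eis_zero ->
  exists g, [/\ eis_comb z R g, eis_dvd g z & eis_dvd g R].
Proof.
move=> z_neq0.
suff gcd_below n : forall g, eis_comb z R g -> g <> eis_zero ->
    eis_norm g < n%:Z -> exists g, [/\ eis_comb z R g, eis_dvd g z & eis_dvd g R].
  apply: (gcd_below `|eis_norm z|.+1 z) => //; first by exists eis_one, eis_zero; eis_ring.
  by have := eis_norm_ge0 z; lia.
elim: n => [|n IH] g comb_g g_neq0 g_lt; first by have := eis_norm_ge0 g; lia.
case: (eis_comb_descent comb_g g_neq0) => [[dvd_z dvd_R]|[g' [comb_g' g'_neq0 lt_g']]].
  by exists g.
by apply: (IH g') => //; lia.
Qed.

(* A gcd [g] of [z] and [R] divides the irreducible [z], so either [g] is a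
   unit or [z] is associate to [g]. *)
Lemma eis_prime_dvd_or_comb z R : eis_prime z ->
  eis_dvd z R \/ eis_comb z R eis_one.
Proof.
move=> [z_neq0 [_ irr]].
have [g [[al [be Eg]] [h Ezh] [c ERc]]] := eis_gcd R z_neq0.
case: (irr g h Ezh) => [[g' gg'1]|[h' hh'1]].
  right; exists (eis_mul al g'), (eis_mul be g').
  by rewrite -gg'1 Eg; eis_ring.
left; exists (eis_mul h' c).
by rewrite ERc Ezh eis_mulA -[eis_mul (eis_mul g h) h']eis_mulA hh'1 eis_mul1.
Qed.

Lemma eis_norm_one_w (y : int) : eis_norm (Eis 1 y) = y ^+ 2 + y + 1.
Proof. by rewrite /eis_norm /=; ring. Qed.

(* With [c = c1 + c2 w], the imaginary part of [(1 + y w) c] vanishes iff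
   [c2 = -y (c1 + c2)], and then [r = (y^2 + y + 1) (c1 + c2)]. *)
Lemma eis_dvd_one_w_int (y r : int) : eis_dvd (Eis 1 y) (Eis r 0) ->
  exists k, r = (y ^+ 2 + y + 1) * k.
Proof.
case=> -[c1 c2] /(congr1 (fun x => (re x, im x))) /= [-> Ei].
exists (c1 + c2); apply/eqP; rewrite -subr_eq0.
have -> : 1 * c1 - y * c2 - (y ^+ 2 + y + 1) * (c1 + c2) =
          - ((y + 1) * (1 * c2 + y * c1 + y * c2)) by ring.
by rewrite -Ei mulr0 oppr0.
Qed.

(* If [(1 + y w, r)] is the unit ideal and [r] divides [N(1 + y w)], then [r]
   divides [conj(1 + y w) = (1 + y) - y w], hence divides [1]. *)
Lemma eis_comb_one_w_int (y r s : int) : y ^+ 2 + y + 1 = r * s ->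
  eis_comb (Eis 1 y) (Eis r 0) eis_one -> exists k, 1 = r * k.
Proof.
move=> Ers [al [be E1]].
have norm_rs : eis_mul (Eis 1 y) (eis_conj (Eis 1 y)) = eis_mul (Eis r 0) (Eis s 0).
  by rewrite eis_mul_conj eis_norm_one_w Ers; apply: eis_ext => /=; ring.
have : eis_conj (Eis 1 y) =
       eis_mul (Eis r 0) (eis_add (eis_mul al (Eis s 0)) (eis_mul be (eis_conj (Eis 1 y)))).
  rewrite -[LHS]eis_mul1 E1.
  transitivity (eis_add (eis_mul al (eis_mul (Eis r 0) (Eis s 0)))
                        (eis_mul be (eis_mul (Eis r 0) (eis_conj (Eis 1 y))))).
    by rewrite -norm_rs; eis_ring.
  by eis_ring.
case: (eis_add _ _) => c1 c2 /(congr1 (fun x => (re x, im x))) /= [E E'].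
by exists (c1 + c2); lia.
Qed.

Lemma prime_of_eis_prime_one_w (n : nat) : (0 < n)%N ->
  eis_prime (Eis 1 n%:Z) -> prime (n ^ 2 + n + 1).
Proof.
move=> n_gt0 z_prime; apply/negP => /negP /primePn [|[r /andP [r_gt1 r_lt] r_dvd]].
  by rewrite ltnNge => /negP; apply; nia.
set s := ((n ^ 2 + n + 1) %/ r)%N.
have Ers : (n ^ 2 + n + 1 = s * r)%N by rewrite divnK.
have s_gt1 : (1 < s)%N by move: Ers r_lt; nia.
case: (eis_prime_dvd_or_comb (Eis r 0) z_prime).
  move=> /eis_dvd_one_w_int [k Ek].
  by case: (lerP k 0) => k_sign; nia.
move=> /(eis_comb_one_w_int (s := s)) [|k Ek]; first by lia.
by case: (lerP k 0) => k_sign; nia.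
Qed.

Lemma eis_not_prime_two_even (m : nat) : (0 < m)%N -> ~~ odd m ->
  ~ eis_prime (Eis 2 m%:Z).
Proof.
move=> m_gt0 m_even.
have -> : Eis 2 m%:Z = eis_mul (Eis 2 0) (Eis 1 m./2%:Z).
  have := odd_double_half m; rewrite (negbTE m_even) add0n => Em.
  by apply: eis_ext; rewrite /= -{1}Em -muln2; lia.
by apply: eis_mul_not_prime; rewrite /eis_norm /=; apply/eqP; lia.
Qed.

Lemma eis_not_prime_three (k t : int) : 1 <= k -> 1 <= t ->
  ~ eis_prime (Eis 3 (t * (k ^+ 2 - 3 * k + 9) - k)).
Proof.
move=> k_ge1 t_ge1.
have -> : Eis 3 (t * (k ^+ 2 - 3 * k + 9) - k) =
          eis_mul (Eis (k - 3) 3) (Eis (3 * t) (t * k - 1 - 3 * t)).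
  by apply: eis_ext => /=; ring.
by apply: eis_mul_not_prime; rewrite /eis_norm /=; apply/eqP; nia.
Qed.

Definition eis_sieve (N : nat) : nat := \prod_(1 <= k < N.+1) (k ^ 2 + 9 - 3 * k).

Lemma eis_sieve_odd N : odd (eis_sieve N).
Proof.
rewrite /eis_sieve; elim/big_rec: _ => // k m _ m_odd.
rewrite oddM m_odd andbT.
have E : (k ^ 2 + 9 - 3 * k + k.*2.*2 = k * k.+1 + 9)%N by rewrite -!muln2; nia.
by move: (congr1 odd E); rewrite !oddD odd_double oddM /= andbN addbF.
Qed.

Lemma eis_sieve_dvd N k : (1 <= k <= N)%N -> (k ^ 2 + 9 - 3 * k %| eis_sieve N)%N.
Proof.
move=> k_range; rewrite /eis_sieve (bigD1_seq k) ?iota_uniq //=; first exact: dvdn_mulr.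
by rewrite mem_index_iota; lia.
Qed.

Lemma inQ_nat x : inQ x -> exists a b : nat, [/\ (0 < a)%N, (0 < b)%N & x = Eis a b].
Proof.
case: x => [[a|a] [b|b]] [/= a_gt0 b_gt0] //.
by exists a, b; split => //; lia.
Qed.

Lemma large_prime_of_split (N n j : nat) : (0 < n)%N -> (0 < j)%N ->
  eis_prime (Eis 1 n%:Z) -> eis_prime (Eis 3 j%:Z) -> (n + j = 7 * eis_sieve N)%N ->
  exists m : nat, (N < m)%N /\ prime (m ^ 2 + m + 1).
Proof.
move=> n_gt0 j_gt0 p_prime q_prime Enj.
have [N_lt|n_le] := ltnP N n; first by exists n; split; last exact: prime_of_eis_prime_one_w.
have /dvdnP [e Ee] : (n ^ 2 + 9 - 3 * n %| eis_sieve N)%N by apply: eis_sieve_dvd; lia.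
have e_gt0 : (0 < e)%N by move: (eis_sieve_odd N); rewrite Ee; case: e {Ee}.
exfalso; apply: (@eis_not_prime_three n%:Z (7 * e)%N%:Z); try lia.
suff -> : (7 * e)%N%:Z * (n%:Z ^+ 2 - 3 * n%:Z + 9) - n%:Z = j%:Z by [].
by move: Enj; rewrite Ee; nia.
Qed.

Theorem mainTheorem2 :
  (forall a b : int, (3 < a)%R -> (3 < b)%R ->
     exists p q : eis, eis_prime p /\ eis_prime q /\ inQ p /\ inQ q /\
                       Eis a b = eis_add p q) ->
  forall N : nat, exists n : nat, (N < n)%N /\ prime (n ^ 2 + n + 1).
Proof.
move=> goldbach N; have P_odd := eis_sieve_odd N.
have P_gt0 : (0 < eis_sieve N)%N by case: (eis_sieve N) P_odd.
have [p [q [p_prime [q_prime [/inQ_nat [a1 [b1 [a1_gt0 b1_gt0 Ep]]]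
                               [/inQ_nat [a2 [b2 [a2_gt0 b2_gt0 Eq]]] Epq]]]]]] :=
  goldbach 4 (7 * eis_sieve N)%N%:Z erefl (ltac:(lia)).
subst p q; case: Epq => Ea Eb.
have [a1_1|[a1_2|a1_3]] : (a1 = 1 \/ a1 = 2 \/ a1 = 3)%N by lia.
- have a2_3 : a2 = 3%N by lia.
  by subst; apply: (large_prime_of_split b1_gt0 b2_gt0 p_prime q_prime); lia.
- have a2_2 : a2 = 2%N by lia.
  have : odd (b1 + b2) by rewrite -Eb oddM P_odd.
  subst; rewrite oddD; case: (boolP (odd b1)) => /= [_ b2_odd|b1_even _].
  + by case: (eis_not_prime_two_even b2_gt0 b2_odd).
  + by case: (eis_not_prime_two_even b1_gt0 b1_even).
- have a2_1 : a2 = 1%N by lia.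
  by subst; apply: (large_prime_of_split b2_gt0 b1_gt0 q_prime p_prime); lia.
Qed.
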